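(* Let $n\ge1$ be an integer with $\phi(n)\ge n/2$, and let $\mathcal{D}_{S_1},\mathcal{D}_{S_2}\subseteq\mathcal{D}_{[n]}\setminus\{n\}$. If $\mathrm{Spec}(\mathrm{ICG}(n,\mathcal{D}_{S_1}))=\mathrm{Spec}(\mathrm{ICG}(n,\mathcal{D}_{S_2}))$, then $1\notin\mathcal{D}_{S_1}\triangle\mathcal{D}_{S_2}$.
   Context: Identify $\mathbb{Z}_n$ with $[n]=\{1,\dots,n\}$. For a divisor $d$ of $n$, $G_n(d)=\{j\in[n]:\gcd(j,n)=d\}$; $\mathcal{D}_{[n]}$ is the set of positive divisors of $n$. For $\mathcal{D}\subseteq\mathcal{D}_{[n]}\setminus\{n\}$, $\mathrm{ICG}(n,\mathcal{D})=\mathrm{Cay}(\mathbb{Z}_n,S)$ with $S=\bigcup_{d\in\mathcal{D}}G_n(d)$, and $\mathcal{D}=\mathcal{D}_S$. $\phi$ is Euler's totient function; $\triangle$ denotes symmetric difference; $\mathrm{Spec}$ is the multiset of adjacency eigenvalues. *)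

From mathcomp Require Import all_boot all_order all_algebra all_field.
Set Implicit Arguments. Unset Strict Implicit. Unset Printing Implicit Defensive.
Import GRing.Theory Num.Theory.
Local Open Scope ring_scope.

(* Z_n is identified with 'I_n = {0,...,n-1}; the residue 0 plays the role of
   n in [n] = {1,...,n}.  Since gcd(0,n) = n, this does not change G_n(d). *)

Definition icg_conn (n : nat) (D : seq nat) : pred nat :=
  [pred j | (j < n)%N && (gcdn j n \in D)].

(* Adjacency matrix of ICG(n, D) = Cay(Z_n, S): x ~ y iff y - x in S. *)
Definition icg_adj (n : nat) (D : seq nat) : 'M[algC]_n :=
  \matrix_(i < n, j < n) ((icg_conn n D ((j + n - i) %% n)%N : bool)%:R).

(* Spectrum of a square complex matrix as a multiset of eigenvalues:
   the multiplicity function x |-> multiplicity of x as an eigenvalue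
   (root of the characteristic polynomial). *)
Definition Spec (n : nat) (A : 'M[algC]_n) : algC -> nat :=
  fun x => mup x (char_poly A).

Definition proper_divisor_set (n : nat) (D : seq nat) : Prop :=
  forall d, d \in D -> (d %| n)%N /\ d <> n.

Definition symdiff (A B : seq nat) : pred nat :=
  [pred x | (x \in A) (+) (x \in B)].

From mathcomp Require Import all_boot all_order all_algebra all_field zify.
Set Implicit Arguments. Unset Strict Implicit. Unset Printing Implicit Defensive.
Import Order.TTheory GRing.Theory Num.Theory.

(* ICG(n, D) is a circulant, hence |S|-regular, graph, and a regular graph has
   its degree as an eigenvalue of largest modulus.  Cospectral graphs thus have
   the same degree |S|.  If 1 is in D then S contains all phi(n) units, so
   |S| >= phi(n) >= n/2; if 1 is not in D then S misses the units and 0, so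
   |S| <= n - phi(n) - 1 < n/2.  Hence 1 lies in both or in neither set. *)

Local Open Scope ring_scope.

Lemma val_subZp m (i j : 'I_m.+1) : val (j - i) = ((j + m.+1 - i) %% m.+1)%N.
Proof. by rewrite /= modnDmr addnBA // ltnW. Qed.

Section Circulant.

Variable R : nmodType.

Definition circulant n (c : nat -> R) : 'M[R]_n :=
  \matrix_(i < n, j < n) c ((j + n - i) %% n)%N.

Lemma circulant_colsum n (c : nat -> R) (j : 'I_n) :
  \sum_(i < n) circulant n c i j = \sum_(k < n) c k.
Proof.
case: n j => [|m] j; first by case: j.
under eq_bigr do rewrite mxE -val_subZp.
by rewrite [RHS](reindex_inj (@subrI _ j)).
Qed.

Lemma circulant_rowsum n (c : nat -> R) (i : 'I_n) :
  \sum_(j < n) circulant n c i j = \sum_(k < n) c k.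
Proof.
case: n i => [|m] i; first by case: i.
under eq_bigr do rewrite mxE -val_subZp.
by rewrite [RHS](reindex_inj (@subIr _ i)).
Qed.

End Circulant.

Lemma eigenvalue_const_colsum (F : fieldType) n (A : 'M[F]_n) r :
  (0 < n)%N -> (forall j, \sum_(i < n) A i j = r) -> eigenvalue A r.
Proof.
move=> n_gt0 colsum; apply/eigenvalueP; exists (const_mx 1).
  apply/rowP => j; rewrite !mxE -(colsum j) mulr1.
  by apply: eq_bigr => i _; rewrite mxE mul1r.
apply/eqP => /rowP /(_ (Ordinal n_gt0)) /eqP; by rewrite !mxE oner_eq0.
Qed.

Lemma norm_eigenvalue_le_rowsum (R : numFieldType) n (A : 'M[R]_n) r x :
  (forall i j, 0 <= A i j) -> (forall i, \sum_(j < n) A i j = r) ->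
  eigenvalue A x -> `|x| <= r.
Proof.
move=> A_ge0 rowsum /eigenvalueP [v vA v_neq0].
pose T := \sum_(j < n) `|v 0 j|.
have T_gt0 : 0 < T.
  have [j vj_neq0] : exists j, v 0 j != 0.
    apply/existsP; apply: contraR v_neq0 => /existsPn v0.
    by apply/eqP/rowP => j; rewrite !mxE; apply/eqP/negPn/v0.
  rewrite /T (bigD1 j) //= ltr_pwDl ?normr_gt0 //.
  by rewrite sumr_ge0.
have vA_le j : `|x| * `|v 0 j| <= \sum_(i < n) `|v 0 i| * A i j.
  have := congr1 (fun M : 'M_(1, n) => M 0 j) vA; rewrite /= !mxE => vAj.
  rewrite -normrM -vAj (le_trans (ler_norm_sum _ _ _)) //.
  by apply: ler_sum => i _; rewrite normrM (ger0_norm (A_ge0 i j)).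
suff : `|x| * T <= r * T by rewrite ler_pM2r.
rewrite /T !mulr_sumr (le_trans (ler_sum _ (fun j _ => vA_le j))) //.
rewrite exchange_big /=; apply: ler_sum => i _.
by rewrite -mulr_sumr rowsum mulrC.
Qed.

Lemma eigenvalue_mup_gt0 (F : fieldType) n (A : 'M[F]_n) x :
  eigenvalue A x = (0 < mup x (char_poly A))%N.
Proof.
by rewrite eigenvalue_root_char mup_geq ?monic_neq0 ?char_poly_monic // expr1 dvdp_XsubCl.
Qed.

Definition icg_degree n D := (\sum_(k < n) icg_conn n D k)%N.

Lemma icg_adjE n D : icg_adj n D = circulant n (fun k => (icg_conn n D k)%:R).
Proof. by []. Qed.

Lemma icg_adj_colsum n D (j : 'I_n) :
  \sum_(i < n) icg_adj n D i j = (icg_degree n D)%:R.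
Proof. by rewrite icg_adjE circulant_colsum natr_sum. Qed.

Lemma icg_adj_rowsum n D (i : 'I_n) :
  \sum_(j < n) icg_adj n D i j = (icg_degree n D)%:R.
Proof. by rewrite icg_adjE circulant_rowsum natr_sum. Qed.

Lemma eigenvalue_icg_degree n D :
  (0 < n)%N -> eigenvalue (icg_adj n D) (icg_degree n D)%:R.
Proof. by move=> n_gt0; apply: eigenvalue_const_colsum (icg_adj_colsum D). Qed.

Lemma eigenvalue_icg_adj_le n D x :
  eigenvalue (icg_adj n D) x%:R -> (x <= icg_degree n D)%N.
Proof.
move/(norm_eigenvalue_le_rowsum _ (icg_adj_rowsum D)).
by rewrite normr_nat ler_nat; apply=> i j; rewrite mxE ler0n.
Qed.

Lemma totient_le_icg_degree n D : 1%N \in D -> (totient n <= icg_degree n D)%N.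
Proof.
move=> D1; rewrite totient_count_coprime big_mkord; apply: leq_sum => k _.
rewrite /icg_conn inE ltn_ord /coprime gcdnC.
by case: eqP => // ->; rewrite D1.
Qed.

Lemma icg_degree_totient_lt n D : (1 < n)%N -> proper_divisor_set n D ->
  1%N \notin D -> (icg_degree n D + totient n < n)%N.
Proof.
move=> n_gt1 D_proper D1.
have n_gt0 : (0 < n)%N by lia.
have zero_count : (\sum_(k < n) (val k == 0%N) = 1)%N.
  rewrite (bigD1 (Ordinal n_gt0)) //= big1 // => k k_neq0.
  by case: eqP => // k0; case/negP: k_neq0; apply/eqP/val_inj.
rewrite -addn1 -{}zero_count totient_count_coprime big_mkord -!big_split /=.
rewrite -[X in (_ <= X)%N]card_ord -sum1_card leq_sum // => k _.
rewrite /icg_conn inE ltn_ord /=.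
have [->|k_neq0] := eqVneq (val k) 0%N.
  rewrite gcd0n /coprime gcdn0 (negbTE (_ : n != 1%N)) ?addn0; last by lia.
  by case nD: (n \in D) => //; case: (D_proper _ nD).
rewrite addn0 /coprime gcdnC; case: eqP => [->|_]; first by rewrite (negbTE D1).
by case: (_ \in D).
Qed.

Lemma cospectral_icg_one_mem n D1 D2 :
  (1 <= n)%N -> (n <= 2 * totient n)%N ->
  proper_divisor_set n D1 -> proper_divisor_set n D2 ->
  Spec (icg_adj n D1) = Spec (icg_adj n D2) -> 1%N \in D1 -> 1%N \in D2.
Proof.
move=> n_gt0 half_totient D1_proper D2_proper cospec D1_1.
apply: contraT => D2_1.
have n_gt1 : (1 < n)%N by case: (D1_proper _ D1_1) => _; lia.
have eig2 : eigenvalue (icg_adj n D2) (icg_degree n D1)%:R.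
  by rewrite eigenvalue_mup_gt0 -[mup _ _]/(Spec _ _) -cospec -eigenvalue_mup_gt0
             eigenvalue_icg_degree.
have := eigenvalue_icg_adj_le eig2.
have := totient_le_icg_degree n D1_1.
have := icg_degree_totient_lt n_gt1 D2_proper D2_1.
lia.
Qed.

Theorem lemma3p13 (n : nat) (D1 D2 : seq nat) :
  (1 <= n)%N -> (n <= 2 * totient n)%N ->
  proper_divisor_set n D1 -> proper_divisor_set n D2 ->
  Spec (icg_adj n D1) = Spec (icg_adj n D2) ->
  1%N \notin symdiff D1 D2.
Proof.
move=> n_gt0 half_totient D1_proper D2_proper cospec; rewrite inE.
have -> : (1%N \in D1) = (1%N \in D2).
  apply/idP/idP.
  - exact: cospectral_icg_one_mem n_gt0 half_totient D1_proper D2_proper cospec.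
  - exact: cospectral_icg_one_mem n_gt0 half_totient D2_proper D1_proper (esym cospec).
by rewrite addbb.
Qed.
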